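(* Let $(a,b)\in\mathbb{C}^2$ and $X=\{u_1x=v_1y,\ u_2z=v_2t,\ w^2+xy+zt=a(xt+yz)+b(xz+yt)\}\subset\mathbb{P}^1\times\mathbb{P}^1\times\mathbb{P}^4$, and let $G\subset\mathrm{Aut}(X)$ be the group generated by $\tau_1,\tau_2,\tau_3$. Then: (1) if $X$ is smooth, then $X$ has no $G$-fixed points; (2) if $X$ has exactly one singular point, then this singular point is the only $G$-fixed point in $X$.
   Context: Coordinates are $([u_1:v_1],[u_2:v_2],[x:y:z:t:w])$. The involutions are $\tau_1\colon([u_1:v_1],[u_2:v_2],[x:y:z:t:w])\mapsto([v_1:u_1],[v_2:u_2],[y:x:t:z:w])$, $\tau_2\colon\mapsto([u_2:v_2],[u_1:v_1],[z:t:x:y:w])$, $\tau_3\colon\mapsto([u_1:v_1],[u_2:v_2],[x:y:z:t:-w])$; $G\cong\boldsymbol{\mu}_2^3$. *)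

From mathcomp Require Import all_boot all_algebra.
From mathcomp Require Import Rstruct complex.
From mathcomp Require Import mpoly.
Set Implicit Arguments. Unset Strict Implicit. Unset Printing Implicit Defensive.
Import GRing.Theory.
Local Open Scope ring_scope.

Definition C : numClosedFieldType := complex Rdefinitions.R.

(* Homogeneous coordinates ([u1:v1],[u2:v2],[x:y:z:t:w]) are stored as a
   function 'I_9 -> C with indices
   u1 = 0, v1 = 1, u2 = 2, v2 = 3, x = 4, y = 5, z = 6, t = 7, w = 8. *)
Definition iu1 : 'I_9 := inord 0.
Definition iv1 : 'I_9 := inord 1.
Definition iu2 : 'I_9 := inord 2.
Definition iv2 : 'I_9 := inord 3.
Definition ix : 'I_9 := inord 4.
Definition iy : 'I_9 := inord 5.
Definition iz : 'I_9 := inord 6.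
Definition it : 'I_9 := inord 7.
Definition iw : 'I_9 := inord 8.

Definition coords := 'I_9 -> C.

Definition factor (i : 'I_9) : 'I_3 :=
  if (i < 2)%N then inord 0 else if (i < 4)%N then inord 1 else inord 2.

Definition valid (v : coords) : Prop :=
  forall k : 'I_3, exists i : 'I_9, factor i = k /\ v i != 0.

Definition proj_eq (v v' : coords) : Prop :=
  exists lam : 'I_3 -> C, (forall k, lam k != 0) /\
    forall i, v' i = lam (factor i) * v i.

Definition F (a b : C) (k : 'I_3) : {mpoly C[9]} :=
  if k == inord 0 :> 'I_3 then 'X_iu1 * 'X_ix - 'X_iv1 * 'X_iy
  else if k == inord 1 :> 'I_3 then 'X_iu2 * 'X_iz - 'X_iv2 * 'X_it
  else 'X_iw ^+ 2 + 'X_ix * 'X_iy + 'X_iz * 'X_it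
       - a%:MP * ('X_ix * 'X_it + 'X_iy * 'X_iz)
       - b%:MP * ('X_ix * 'X_iz + 'X_iy * 'X_it).

Definition onX (a b : C) (v : coords) : Prop :=
  valid v /\ forall k, (F a b k).@[v] = 0.

Definition jac (a b : C) (v : coords) : 'M[C]_(3, 9) :=
  \matrix_(k < 3, i < 9) ((F a b k)^`M(i)).@[v].

Definition singular (a b : C) (v : coords) : Prop :=
  onX a b v /\ (\rank (jac a b v) < 3)%N.

Definition smoothX (a b : C) : Prop := forall v, onX a b v -> ~ singular a b v.

Definition tau1 (v : coords) : coords :=
  fun i => if i == iu1 then v iv1 else if i == iv1 then v iu1
    else if i == iu2 then v iv2 else if i == iv2 then v iu2
    else if i == ix then v iy else if i == iy then v ix
    else if i == iz then v it else if i == it then v iz else v i.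

Definition tau2 (v : coords) : coords :=
  fun i => if i == iu1 then v iu2 else if i == iv1 then v iv2
    else if i == iu2 then v iu1 else if i == iv2 then v iv1
    else if i == ix then v iz else if i == iy then v it
    else if i == iz then v ix else if i == it then v iy else v i.

Definition tau3 (v : coords) : coords :=
  fun i => if i == iw then - v iw else v i.

(* v is fixed by G = <tau1, tau2, tau3> (equivalently, by each generator). *)
Definition Gfixed (v : coords) : Prop :=
  proj_eq v (tau1 v) /\ proj_eq v (tau2 v) /\ proj_eq v (tau3 v).

(* A G-fixed point has w = 0: tau3 acts on P^4 by w |-> -w, and if w <> 0 the
   scalar of this action is -1, which kills x, y, z, t and then w by the last
   equation.  The remaining coordinates are proportional to (1, L, M, LM) with
   L, M = +-1, and on such a point the last equation forces the gradient of
   w^2 + q(x, y, z, t) to vanish, so the Jacobian has a zero row: fixed points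
   are singular.  Conversely each tau_i is a linear substitution of the
   coordinates that maps every equation of X to a multiple of another one, so
   by the chain rule it preserves X and its singular locus; hence it fixes a
   unique singular point. *)

From mathcomp Require Import all_boot all_algebra.
From mathcomp Require Import Rstruct complex.
From mathcomp Require Import mpoly.
From mathcomp Require Import ring.
Set Implicit Arguments. Unset Strict Implicit. Unset Printing Implicit Defensive.
Import GRing.Theory Num.Theory.
Local Open Scope ring_scope.

Section ChainRule.
Variables (R : comNzRingType) (n k : nat) (L : n.-tuple {mpoly R[k]}).

Lemma mderivXU (i j : 'I_n) : ('X_j : {mpoly R[n]})^`M(i) = (j == i)%:R%:MP.
Proof.
rewrite mderivX mnm1E; have [<-|_] := eqVneq j i; last by rewrite scale0r.
have -> : (U_(j) - U_(j) = 0)%MM by apply/mnmP => l; rewrite mnmBE mnm0E subnn.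
by rewrite mpolyX0 scale1r.
Qed.

Lemma comp_mpolyM (p q : {mpoly R[n]}) : (p * q) \mPo L = (p \mPo L) * (q \mPo L).
Proof. exact: rmorphM. Qed.

Lemma mderiv_comp_mpoly (i : 'I_k) (p : {mpoly R[n]}) :
  (p \mPo L)^`M(i) = \sum_(j < n) (p^`M(j) \mPo L) * (tnth L j)^`M(i).
Proof.
pose chain q := (q \mPo L)^`M(i) = \sum_(j < n) (q^`M(j) \mPo L) * (tnth L j)^`M(i).
have chainZ c q : chain q -> chain (c *: q).
  rewrite /chain comp_mpolyZ mderivZ => ->; rewrite scaler_sumr.
  by apply: eq_bigr => j _; rewrite mderivZ comp_mpolyZ scalerAl.
have chainD q r : chain q -> chain r -> chain (q + r).
  rewrite /chain comp_mpolyD mderivD => -> ->; rewrite -big_split.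
  by apply: eq_bigr => j _; rewrite mderivD comp_mpolyD mulrDl.
have chainM q r : chain q -> chain r -> chain (q * r).
  rewrite /chain comp_mpolyM mderivM => -> ->; rewrite mulr_suml mulr_sumr -big_split.
  by apply: eq_bigr => j _ /=; rewrite mderivM comp_mpolyD !comp_mpolyM; ring.
have chain1 : chain 1.
  rewrite /chain comp_mpoly1 -mpolyC1 mderivC big1 // => j _.
  by rewrite mderivC comp_mpolyC mul0r.
have chainX j : chain 'X_j.
  rewrite /chain comp_mpolyXU -tnth_nth (bigD1 j) //= big1 => [|l /negbTE lj].
    by rewrite mderivXU eqxx comp_mpolyC mul1r addr0.
  by rewrite mderivXU eq_sym lj comp_mpolyC mul0r.
rewrite [p]mpolyE; elim/big_ind: _ => [|q r|m _]; first by rewrite -(scale0r 1); exact: chainZ.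
  exact: chainD.
apply: chainZ; rewrite mpolyXE_id; elim/big_ind: _ => [|q r|j _]; [exact: chain1|exact: chainM|].
by elim: (m j) => [|e IHe]; [exact: chain1 | rewrite exprS; exact: chainM].
Qed.

End ChainRule.

(* [jac a b v] is [jacobian (F a b) v] by definition. *)
Definition jacobian (R : comNzRingType) m n (F : 'I_m -> {mpoly R[n]}) (v : 'I_n -> R) :
  'M[R]_(m, n) := \matrix_(k, i) ((F k)^`M(i)).@[v].

Lemma jacobian_eq (R : comNzRingType) m n (F : 'I_m -> {mpoly R[n]}) (v w : 'I_n -> R) :
  v =1 w -> jacobian F v = jacobian F w.
Proof. by move=> vw; apply/matrixP => k i; rewrite !mxE (meval_eq _ vw). Qed.

Lemma jacobian_comp (R : comNzRingType) m n k (F : 'I_m -> {mpoly R[n]})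
    (L : n.-tuple {mpoly R[k]}) (v : 'I_k -> R) :
  jacobian (fun l => F l \mPo L) v =
  jacobian F (fun j => (tnth L j).@[v]) *m jacobian (tnth L) v.
Proof.
apply/matrixP => l i; rewrite !mxE mderiv_comp_mpoly raddf_sum /=.
by apply: eq_bigr => j _; rewrite mevalM comp_mpoly_meval !mxE.
Qed.

Lemma mxrank_lt_row0 (R : fieldType) m n (A : 'M[R]_(m, n)) k :
  row k A = 0 -> (\rank A < m)%N.
Proof.
move=> Ak0; rewrite ltn_neqAle rank_leq_row andbT; apply/negP => freeA.
have := mulmx_free_eq0 (delta_mx 0 k : 'rV_m) freeA.
rewrite -rowE Ak0 eqxx => /esym/eqP/matrixP/(_ 0 k)/eqP.
by rewrite !mxE !eqxx oner_eq0.
Qed.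

Section Pullback.
Variables (R : fieldType) (m n : nat) (F : 'I_m -> {mpoly R[n]}).
Variable L : n.-tuple {mpoly R[n]}.
Hypothesis F_pullback : forall l, exists k c, F l = c *: (F k \mPo L).

Lemma meval_pullback_eq0 v :
  (forall k, (F k).@[fun j => (tnth L j).@[v]] = 0) -> forall l, (F l).@[v] = 0.
Proof.
move=> FLv0 l; have [k [c ->]] := F_pullback l.
by rewrite mevalZ comp_mpoly_meval FLv0 mulr0.
Qed.

Lemma mxrank_jacobian_pullback v :
  (\rank (jacobian F v) <= \rank (jacobian F (fun j => (tnth L j).@[v])))%N.
Proof.
apply: leq_trans (mxrankM_maxl _ (jacobian (tnth L) v)).
rewrite -jacobian_comp; apply/mxrankS/row_subP => l.
have [k [c FlE]] := F_pullback l.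
have -> : row l (jacobian F v) = c *: row k (jacobian (fun l => F l \mPo L) v).
  by apply/rowP => i; rewrite !mxE FlE mderivZ mevalZ.
exact/scalemx_sub/row_sub.
Qed.

End Pullback.

Section QuadricFixedPoints.
Variables (R : numFieldType) (a b : R).

Definition quadform (x y z t : R) :=
  x * y + z * t - a * (x * t + y * z) - b * (x * z + y * t).

Lemma quadric_w_eq0 (N x y z t w : R) :
  - w = N * w -> x = N * x -> y = N * y -> z = N * z -> t = N * t ->
  w ^+ 2 + quadform x y z t = 0 -> w = 0.
Proof.
move=> hw hx hy hz ht q0; apply/eqP/negPn/negP => w_neq0.
have N1 : N = -1 by apply: (mulIf w_neq0); rewrite -hw mulN1r.
have eq0 u : u = N * u -> u = 0.
  rewrite N1 mulN1r => /eqP; rewrite -subr_eq0 opprK -mulr2n mulrn_eq0 /=.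
  by move/eqP.
move: q0; rewrite /quadform (eq0 _ hx) (eq0 _ hy) (eq0 _ hz) (eq0 _ ht).
by rewrite !(mul0r, mulr0, addr0, subr0) => /eqP; rewrite expf_eq0 (negbTE w_neq0).
Qed.

Lemma quadric_gradient_eq0 (L M x y z t : R) :
  x != 0 -> y = L * x -> x = L * y -> z = M * x -> x = M * z -> t = M * y ->
  quadform x y z t = 0 ->
  [/\ y - a * t - b * z = 0, x - a * z - b * t = 0,
      t - a * y - b * x = 0 & z - a * x - b * y = 0].
Proof.
move=> x_neq0 hy hx hz hx' ht; subst y z t.
have sign c : x = c * (c * x) -> c = 1 \/ c = -1.
  move=> hc; have /eqP : (c ^+ 2 - 1) * x = 0.
    by rewrite mulrBl mul1r expr2 -mulrA -hc subrr.
  by rewrite mulf_eq0 (negbTE x_neq0) orbF subr_eq0 sqrf_eq1 => /orP[] /eqP; [left|right].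
pose K := L - a * L * M - b * M.
have [q gx gy gz gt] : [/\ quadform x (L * x) (M * x) (M * (L * x)) = x ^+ 2 * K *+ 2,
    L * x - a * (M * (L * x)) - b * (M * x) = x * K,
    x - a * (M * x) - b * (M * (L * x)) = x * L * K,
    M * (L * x) - a * (L * x) - b * x = x * M * K
  & M * x - a * x - b * (L * x) = x * L * M * K].
  by rewrite /quadform /K; case: (sign L hx) => ->; case: (sign M hx') => ->; split; ring.
rewrite q => /eqP; rewrite mulrn_eq0 mulf_eq0 expf_eq0 (negbTE x_neq0) /= => /eqP K0.
by rewrite gx gy gz gt K0 !mulr0.
Qed.

End QuadricFixedPoints.

(* The named coordinates are [inord] constants, which do not reduce ([inord]
   goes through the opaque [idP]); [inordK] turns them into numerals, so that
   the tests in [tau1], [tau2], [tau3] and [factor] compute. *)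
Ltac unfold_coords :=
  rewrite /iu1 /iv1 /iu2 /iv2 /ix /iy /iz /it /iw /factor -?val_eqE /= ?inordK //=
          /iu1 /iv1 /iu2 /iv2 /ix /iy /iz /it /iw.

Lemma ord_ind n (P : 'I_n.+1 -> Prop) :
  (forall k, (k < n.+1)%N -> P (inord k)) -> forall i, P i.
Proof. by move=> Pk i; rewrite -(inord_val i); apply: Pk. Qed.

Lemma coord_ind (P : 'I_9 -> Prop) :
  P iu1 -> P iv1 -> P iu2 -> P iv2 -> P ix -> P iy -> P iz -> P it -> P iw ->
  forall i, P i.
Proof. by move=> *; apply: ord_ind => [[|[|[|[|[|[|[|[|[|]]]]]]]]]]. Qed.

Lemma factor_ind (P : 'I_3 -> Prop) :
  P (inord 0) -> P (inord 1) -> P (inord 2) -> forall k, P k.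
Proof. by move=> *; apply: ord_ind => [[|[|[|]]]]. Qed.

Lemma validE v : valid v <->
  [/\ v iu1 != 0 \/ v iv1 != 0, v iu2 != 0 \/ v iv2 != 0
    & v ix != 0 \/ v iy != 0 \/ v iz != 0 \/ v it != 0 \/ v iw != 0].
Proof.
split=> [vv | [h0 h1 h2]].
  split; [have [i [/eqP fi vi]] := vv (inord 0) | have [i [/eqP fi vi]] := vv (inord 1)
         | have [i [/eqP fi vi]] := vv (inord 2)];
    move: i fi vi; apply: coord_ind; unfold_coords => _ vi; tauto.
elim/factor_ind; [case: h0 | case: h1 | case: h2 => [|[|[|[|]]]]] => vi;
  [exists iu1 | exists iv1 | exists iu2 | exists iv2 | exists ix | exists iy | exists iz
  | exists it | exists iw]; by split; unfold_coords.
Qed.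

Lemma factor_neq : [/\ inord 1 != inord 0 :> 'I_3, inord 2 != inord 0 :> 'I_3
  & inord 2 != inord 1 :> 'I_3].
Proof. by split; rewrite -val_eqE /= !inordK. Qed.

Section Equations.
Variables a b : C.

Lemma F0E : F a b (inord 0) = 'X_iu1 * 'X_ix - 'X_iv1 * 'X_iy.
Proof. by rewrite /F eqxx. Qed.

Lemma F1E : F a b (inord 1) = 'X_iu2 * 'X_iz - 'X_iv2 * 'X_it.
Proof. by rewrite /F; case: factor_neq => /negbTE-> _ _; rewrite eqxx. Qed.

Lemma F2E : F a b (inord 2) = 'X_iw ^+ 2 + 'X_ix * 'X_iy + 'X_iz * 'X_it
  - a%:MP * ('X_ix * 'X_it + 'X_iy * 'X_iz) - b%:MP * ('X_ix * 'X_iz + 'X_iy * 'X_it).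
Proof. by rewrite /F; case: factor_neq => _ /negbTE-> /negbTE->. Qed.

Definition FE := (F0E, F1E, F2E).

Lemma meval_F2 v :
  (F a b (inord 2)).@[v] = v iw ^+ 2 + quadform a b (v ix) (v iy) (v iz) (v it).
Proof.
rewrite F2E (expr2 ('X_iw : {mpoly C[9]})) /quadform.
rewrite !(mevalB, mevalD, mevalM, mevalC, mevalXU).
by ring.
Qed.

Lemma jac_F2 v i : jac a b v (inord 2) i =
  v iw *+ 2 * (iw == i)%:R
  + (v iy - a * v it - b * v iz) * (ix == i)%:R + (v ix - a * v iz - b * v it) * (iy == i)%:R
  + (v it - a * v iy - b * v ix) * (iz == i)%:R + (v iz - a * v ix - b * v iy) * (it == i)%:R.
Proof.
rewrite mxE F2E expr2.
rewrite !(mderivB, mderivD, mderiv_mulC, mderivM, mderivXU).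
rewrite !(mevalB, mevalD, mevalM, mevalC, mevalXU).
by ring.
Qed.

End Equations.

Definition tau1_subst : 9.-tuple {mpoly C[9]} :=
  [tuple 'X_iv1; 'X_iu1; 'X_iv2; 'X_iu2; 'X_iy; 'X_ix; 'X_it; 'X_iz; 'X_iw].

Definition tau2_subst : 9.-tuple {mpoly C[9]} :=
  [tuple 'X_iu2; 'X_iv2; 'X_iu1; 'X_iv1; 'X_iz; 'X_it; 'X_ix; 'X_iy; 'X_iw].

Definition tau3_subst : 9.-tuple {mpoly C[9]} :=
  [tuple 'X_iu1; 'X_iv1; 'X_iu2; 'X_iv2; 'X_ix; 'X_iy; 'X_iz; 'X_it; - 'X_iw].

Lemma tau1_meval v : tau1 v =1 fun i => (tnth tau1_subst i).@[v].
Proof. by apply: coord_ind; rewrite /tau1 (tnth_nth 0) /=; unfold_coords; rewrite mevalXU. Qed.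

Lemma tau2_meval v : tau2 v =1 fun i => (tnth tau2_subst i).@[v].
Proof. by apply: coord_ind; rewrite /tau2 (tnth_nth 0) /=; unfold_coords; rewrite mevalXU. Qed.

Lemma tau3_meval v : tau3 v =1 fun i => (tnth tau3_subst i).@[v].
Proof.
by apply: coord_ind; rewrite /tau3 (tnth_nth 0) /=; unfold_coords; rewrite ?mevalN mevalXU.
Qed.

(* Only [nth] is simplified: [/=] on these polynomial expressions is very slow. *)
Ltac comp_F_subst L :=
  rewrite !FE ?expr2 !(comp_mpolyB, comp_mpolyD, comp_mpolyM, comp_mpolyC, comp_mpolyXU);
  rewrite ?scaleN1r ?scale1r /iu1 /iv1 /iu2 /iv2 /ix /iy /iz /it /iw !inordK; [| by [] ..];
  rewrite /L; simpl nth; rewrite /iu1 /iv1 /iu2 /iv2 /ix /iy /iz /it /iw; ring.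

Lemma F_pullback_tau1 a b l : exists k c, F a b l = c *: (F a b k \mPo tau1_subst).
Proof.
elim/factor_ind: l; [exists (inord 0), (-1) | exists (inord 1), (-1) | exists (inord 2), 1];
  comp_F_subst tau1_subst.
Qed.

Lemma F_pullback_tau2 a b l : exists k c, F a b l = c *: (F a b k \mPo tau2_subst).
Proof.
elim/factor_ind: l; [exists (inord 1), 1 | exists (inord 0), 1 | exists (inord 2), 1];
  comp_F_subst tau2_subst.
Qed.

Lemma F_pullback_tau3 a b l : exists k c, F a b l = c *: (F a b k \mPo tau3_subst).
Proof.
elim/factor_ind: l; [exists (inord 0), 1 | exists (inord 1), 1 | exists (inord 2), 1];
  comp_F_subst tau3_subst.
Qed.

Lemma tau1K v : tau1 (tau1 v) =1 v.
Proof. by apply: coord_ind; do 2 (rewrite [tau1 _ _]/tau1; unfold_coords). Qed.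

Lemma tau2K v : tau2 (tau2 v) =1 v.
Proof. by apply: coord_ind; do 2 (rewrite [tau2 _ _]/tau2; unfold_coords). Qed.

Lemma tau3K v : tau3 (tau3 v) =1 v.
Proof. by apply: coord_ind; do 2 (rewrite [tau3 _ _]/tau3; unfold_coords); rewrite opprK. Qed.

Lemma valid_tau1 v : valid v -> valid (tau1 v).
Proof. by rewrite !validE /tau1; unfold_coords; case=> *; split; tauto. Qed.

Lemma valid_tau2 v : valid v -> valid (tau2 v).
Proof. by rewrite !validE /tau2; unfold_coords; case=> *; split; tauto. Qed.

Lemma valid_tau3 v : valid v -> valid (tau3 v).
Proof. by rewrite !validE /tau3; unfold_coords; rewrite oppr_eq0; case=> *; split; tauto. Qed.

Lemma proj_eq_sym v v' : proj_eq v v' -> proj_eq v' v.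
Proof.
case=> lam [lam_neq0 v'E]; exists (fun k => (lam k)^-1); split=> [k|i].
  by rewrite invr_eq0.
by rewrite v'E mulrA mulVf ?mul1r.
Qed.

Lemma proj_eq_trans v1 v2 v3 : proj_eq v1 v2 -> proj_eq v2 v3 -> proj_eq v1 v3.
Proof.
case=> lam [lam_neq0 v2E] [mu [mu_neq0 v3E]].
exists (fun k => mu k * lam k); split=> [k|i]; first by rewrite mulf_neq0.
by rewrite v3E v2E mulrA.
Qed.

Lemma proj_eq_tau1 v v' : proj_eq v v' -> proj_eq (tau1 v) (tau1 v').
Proof.
case=> lam [lam_neq0 v'E]; exists lam; split=> //.
by apply: coord_ind; rewrite /tau1 !v'E; unfold_coords.
Qed.

Lemma proj_eq_tau2 v v' : proj_eq v v' -> proj_eq (tau2 v) (tau2 v').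
Proof.
case=> lam [lam_neq0 v'E].
exists (fun k => lam (if k == inord 0 then inord 1 else if k == inord 1 then inord 0 else k)).
split=> [k|]; first exact: lam_neq0.
by apply: coord_ind; rewrite /tau2 !v'E; unfold_coords.
Qed.

Lemma proj_eq_tau3 v v' : proj_eq v v' -> proj_eq (tau3 v) (tau3 v').
Proof.
case=> lam [lam_neq0 v'E]; exists lam; split=> //.
by apply: coord_ind; rewrite /tau3 !v'E; unfold_coords; rewrite mulrN.
Qed.

Section Involution.
Variables (a b : C) (tau : coords -> coords) (L : 9.-tuple {mpoly C[9]}).
Hypothesis tau_meval : forall v, tau v =1 fun i => (tnth L i).@[v].
Hypothesis tauK : forall v, tau (tau v) =1 v.
Hypothesis F_pullback : forall l, exists k c, F a b l = c *: (F a b k \mPo L).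
Hypothesis valid_tau : forall v, valid v -> valid (tau v).

Let subst_tau v : (fun j => (tnth L j).@[tau v]) =1 v.
Proof. by move=> j; rewrite -tau_meval tauK. Qed.

Lemma onX_tau v : onX a b v -> onX a b (tau v).
Proof.
case=> vv Fv; split; first exact: valid_tau.
by apply: meval_pullback_eq0 F_pullback _ _ => k; rewrite (meval_eq _ (subst_tau v)).
Qed.

Lemma singular_tau v : singular a b v -> singular a b (tau v).
Proof.
case=> Xv rank_lt3; split; first exact: onX_tau.
apply: leq_ltn_trans (mxrank_jacobian_pullback F_pullback (tau v)) _.
by rewrite (jacobian_eq _ (subst_tau v)).
Qed.

Lemma fixed_by_unique_singular s v :
  singular a b s -> (forall v, singular a b v -> proj_eq s v) ->
  (forall v v', proj_eq v v' -> proj_eq (tau v) (tau v')) ->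
  proj_eq s v -> proj_eq v (tau v).
Proof.
move=> sing_s uniq_s proj_tau sv; apply: proj_eq_trans (proj_eq_sym sv) _.
exact: proj_eq_trans (uniq_s _ (singular_tau sing_s)) (proj_tau _ _ sv).
Qed.

End Involution.

Lemma Gfixed_coords v : Gfixed v -> exists L M N,
  [/\ v iy = L * v ix, v ix = L * v iy, v iz = M * v ix, v ix = M * v iz & v it = M * v iy] /\
  [/\ - v iw = N * v iw, v ix = N * v ix, v iy = N * v iy, v iz = N * v iz & v it = N * v it].
Proof.
case=> [[l1 [_ h1]] [[l2 [_ h2]] [l3 [_ h3]]]].
exists (l1 (inord 2)), (l2 (inord 2)), (l3 (inord 2)).
move: (h1 ix) (h1 iy) (h2 ix) (h2 iz) (h2 iy) (h3 iw) (h3 ix) (h3 iy) (h3 iz) (h3 it).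
by rewrite /tau1 /tau2 /tau3; unfold_coords.
Qed.

Lemma Gfixed_singular a b v : onX a b v -> Gfixed v -> singular a b v.
Proof.
move=> Xv /Gfixed_coords [L [M [N [[y1 x1 z2 x2 t2] [w3 x3 y3 z3 t3]]]]].
have [vv /(_ (inord 2))] := Xv; rewrite meval_F2 => q0.
have w0 : v iw = 0 := quadric_w_eq0 w3 x3 y3 z3 t3 q0.
have x_neq0 : v ix != 0.
  apply/eqP => x0; move/validE: vv => [_ _].
  by rewrite w0 t2 z2 y1 x0 !mulr0 eqxx; case=> [|[|[|[|]]]].
rewrite w0 expr2 mul0r add0r in q0.
have [gx gy gz gt] := quadric_gradient_eq0 x_neq0 y1 x1 z2 x2 t2 q0.
split=> //; apply: (@mxrank_lt_row0 _ _ _ _ (inord 2)); apply/rowP => i.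
by rewrite mxE jac_F2 w0 gx gy gz gt mxE; ring.
Qed.

Theorem lemma4p1 (a b : C) :
  (smoothX a b -> forall v, onX a b v -> ~ Gfixed v) /\
  (forall s, singular a b s -> (forall v, singular a b v -> proj_eq s v) ->
     forall v, onX a b v -> (Gfixed v <-> proj_eq s v)).
Proof.
split=> [smooth v Xv fixv | s sing_s uniq_s v Xv].
  exact: smooth v Xv (Gfixed_singular Xv fixv).
split=> [fixv | sv]; first exact/uniq_s/Gfixed_singular.
split; last split.
- exact (fixed_by_unique_singular tau1_meval tau1K (F_pullback_tau1 a b) valid_tau1
    sing_s uniq_s proj_eq_tau1 sv).
- exact (fixed_by_unique_singular tau2_meval tau2K (F_pullback_tau2 a b) valid_tau2
    sing_s uniq_s proj_eq_tau2 sv).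
- exact (fixed_by_unique_singular tau3_meval tau3K (F_pullback_tau3 a b) valid_tau3
    sing_s uniq_s proj_eq_tau3 sv).
Qed.
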